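(* If $n \ge 3$ is odd, then $\mathrm{sg_e}(K_{n,n}) \ge n+2$ and $\mathrm{sg_e}(K_{n,n-1}) \ge n+1$.
   Context: All graphs are finite, simple and connected. A set $S \subseteq V(G)$ is a strong edge geodetic set of $G$ if one can assign to every unordered pair $\{u,v\}$ of distinct vertices of $S$ either one shortest $u,v$-path $P_{uv}$ in $G$ or no path, in such a way that every edge of $G$ lies on at least one of the assigned paths. The strong edge geodetic number $\mathrm{sg_e}(G)$ is the minimum cardinality of a strong edge geodetic set of $G$. $K_{n,m}$ denotes the complete bipartite graph with parts of sizes $n$ and $m$. *)

From mathcomp Require Import all_boot.
Set Implicit Arguments. Unset Strict Implicit. Unset Printing Implicit Defensive.

Section Geo.
Variable T : finType.

Definition walk_edges (u : T) (s : seq T) : seq (T * T) := zip (u :: s) s.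

Definition shortest_path (e : rel T) (u v : T) (s : seq T) : Prop :=
  [/\ path e u s, last u s = v &
      forall s' : seq T, path e u s' -> last u s' = v -> size s <= size s'].

Definition edge_on_path (x y u : T) (s : seq T) : bool :=
  ((x, y) \in walk_edges u s) || ((y, x) \in walk_edges u s).

(* S is a strong edge geodetic set: to each unordered pair {u,v} of distinct
   vertices of S (represented by u before v in the enumeration order of T)
   is assigned one shortest u,v-path or no path (P u v = None), such that
   every edge lies on some assigned path. *)
Definition strong_edge_geodetic (e : rel T) (S : {set T}) : Prop :=
  exists P : T -> T -> option (seq T),
    (forall u v s, u \in S -> v \in S -> enum_rank u < enum_rank v ->
        P u v = Some s -> shortest_path e u v s) /\
    (forall x y, e x y -> exists u v s,
        [/\ u \in S, v \in S, enum_rank u < enum_rank v,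
            P u v = Some s & edge_on_path x y u s]).

(* k <= sg_e(G): every strong edge geodetic set has at least k vertices
   (the minimum exists since V(G) itself is strong edge geodetic). *)
Definition sge_ge (e : rel T) (k : nat) : Prop :=
  forall S : {set T}, strong_edge_geodetic e S -> k <= #|S|.

End Geo.

Definition Knm (n m : nat) : rel ('I_n + 'I_m)%type :=
  fun x y => match x, y with
             | inl _, inr _ | inr _, inl _ => true
             | _, _ => false
             end.
Arguments Knm n m : clear implicits.

From mathcomp Require Import all_boot zify.
Set Implicit Arguments. Unset Strict Implicit. Unset Printing Implicit Defensive.

(* In a complete bipartite graph a shortest path between distinct vertices has
   one or two edges, so a vertex z outside a strong edge geodetic set S is
   covered only as the middle vertex of assigned paths u, z, v.  If the other
   colour class has p vertices, the p edges at z need (p + odd p)/2 such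
   paths, as each covers two of them; distinct middle vertices use distinct
   pairs {u, v}, of which there are p(p-1)/2.  Hence at most p - 1 - odd p vertices of
   that colour miss S.  All neighbours of a missing vertex lie in S, so only one
   colour class misses vertices, and for n odd both K_{n,n} and K_{n,n-1} miss
   at most n - 2 of them. *)

Lemma leq_sum_card_disjoint (I T : finType) (J : {pred I}) (F : I -> {set T})
    (A : {set T}) :
  (forall i j x, i \in J -> j \in J -> x \in F i -> x \in F j -> i = j) ->
  (forall i, i \in J -> F i \subset A) ->
  \sum_(i in J) #|F i| <= #|A|.
Proof.
move=> F_disj FA.
have cardE (B : {set T}) : #|B| = \sum_x (x \in B : nat).
  by rewrite -sum1_card big_mkcond; apply: eq_bigr => x _; case: (x \in B).
rewrite cardE; under eq_bigr => i _ do rewrite cardE.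
rewrite exchange_big /=; apply: leq_sum => x _.
case: (pickP [pred i | (i \in J) && (x \in F i)]) => [i /andP[iJ xFi] | none].
- rewrite (bigD1 i) //= xFi (subsetP (FA i iJ) x xFi) big1 // => j /andP[jJ ji].
  by apply/eqP; rewrite eqb0; apply: contra ji => xFj; rewrite (F_disj j i x).
- by rewrite big1 // => i iJ; have := none i; rewrite /= iJ /= => ->.
Qed.

Definition ranked_pairs (T : finType) (A : {set T}) : {set T * T} :=
  [set uv | [&& uv.1 \in A, uv.2 \in A & enum_rank uv.1 < enum_rank uv.2]].

Lemma leq_card_ranked_pairs (T : finType) (A : {set T}) :
  (#|ranked_pairs A|).*2 <= #|A| * #|A|.-1.
Proof.
set R := ranked_pairs A.
pose swap (uv : T * T) := (uv.2, uv.1).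
have swapK : involutive swap by case.
have R_neq uv : uv \in R -> uv.1 != uv.2.
  by rewrite inE => /and3P[_ _]; apply: contraTneq => ->; rewrite ltnn.
have RswapR : [disjoint R & swap @: R].
  rewrite disjoints_subset; apply/subsetP => uv uvR; rewrite inE.
  apply/imsetP => -[vu vuR E]; move: uvR vuR.
  by rewrite E !inE /= => /and3P[_ _ lt] /and3P[_ _]; rewrite ltnNge ltnW.
have diagA : [set (x, x) | x in A] \subset setX A A.
  by apply/subsetP => _ /imsetP[x xA ->]; rewrite inE /= xA.
have not_diag uv : uv.1 != uv.2 -> uv \notin [set (x, x) | x in A].
  by apply: contra => /imsetP[x _ ->].
have sub : R :|: swap @: R \subset setX A A :\: [set (x, x) | x in A].
  apply/subsetP => uv /setUP[uvR | /imsetP[vu vuR ->]]; rewrite inE.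
  - move: (uvR) (not_diag _ (R_neq _ uvR)); rewrite inE => /and3P[uA vA _] ->.
    by rewrite inE uA vA.
  - have := R_neq _ vuR; rewrite eq_sym => /(not_diag (swap vu)) ->.
    by move: vuR; rewrite !inE => /and3P[uA vA _]; rewrite /= uA vA.
have := subset_leq_card sub.
rewrite cardsU (disjoint_setI0 RswapR) cards0 subn0 (card_imset _ (inv_inj swapK)).
rewrite cardsD (setIidPr diagA) cardsX card_imset; last by move=> x y [].
by rewrite -addnn -subn1 mulnBr muln1.
Qed.

Lemma mem_walk_edges (T : finType) (u : T) s x y :
  (x, y) \in walk_edges u s -> (x \in u :: s) && (y \in u :: s).
Proof.
rewrite /walk_edges; elim: s u => [|w s IH] u /=; first by rewrite in_nil.
rewrite inE => /orP[/eqP[-> ->] | /IH /andP[xs ys]]; first by rewrite !inE !eqxx orbT.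
by rewrite in_cons xs orbT in_cons ys orbT.
Qed.

Lemma edge_on_path_mem (T : finType) (x y u : T) s :
  edge_on_path x y u s -> (x \in u :: s) && (y \in u :: s).
Proof. by case/orP => /mem_walk_edges //; rewrite andbC. Qed.

Section CompleteBipartite.
Variables (T : finType) (c : T -> bool) (e : rel T).
Hypothesis eE : forall x y, e x y = (c x != c y).

Definition colour_class (b : bool) : {set T} := [set x | c x == b].

Lemma shortest_path_size_le2 u v s :
  u != v -> shortest_path e u v s -> s = [:: v] \/ exists w, s = [:: w; v].
Proof.
move=> uv [es sv s_min].
case: s es sv s_min => [|w [|w' s]] /=.
- by move=> _ vu; rewrite vu eqxx in uv.
- by move=> _ -> _; left.
move=> /and3P[euw eww' es] sv s_min; right; exists w.
have [cuv | cuv] := eqVneq (c u) (c v); last first.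
  by have := s_min [:: v]; rewrite /= eE cuv => /(_ isT erefl).
have ewv : e w v by rewrite eE -cuv eq_sym -eE.
have := s_min [:: w; v]; rewrite /= euw ewv => /(_ isT erefl).
by case: s es sv {s_min} => //= _ ->.
Qed.

Lemma card_colour_classes_setD (S : {set T}) :
  #|S| + #|colour_class true :\: S| + #|colour_class false :\: S| = #|T|.
Proof.
rewrite -addnA -(cardsC S) -(cardsID (colour_class true) (~: S)); congr (_ + (_ + _)).
  by apply: eq_card => x; rewrite !inE andbC.
by apply: eq_card => x; rewrite !inE andbC; case: (c x).
Qed.

Section Assignment.
Variables (S : {set T}) (P : T -> T -> option (seq T)).
Hypothesis P_shortest : forall u v s, u \in S -> v \in S ->
  enum_rank u < enum_rank v -> P u v = Some s -> shortest_path e u v s.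
Hypothesis P_cover : forall x y, e x y -> exists u v s,
  [/\ u \in S, v \in S, enum_rank u < enum_rank v,
      P u v = Some s & edge_on_path x y u s].

Lemma nonmember_edge_cover x y : x \notin S -> e x y ->
  exists u v, [/\ (u, v) \in ranked_pairs S, P u v = Some [:: x; v]
                & y \in [:: u; v]].
Proof.
move=> xS exy; have [u [v [s [uS vS ruv Puv /edge_on_path_mem xy_on]]]] := P_cover exy.
have xy : x != y by apply: contraTneq exy => ->; rewrite eE eqxx.
have [xu xv] : x != u /\ x != v by split; apply: contraNneq xS => ->.
have uv : u != v by apply: contraTneq ruv => ->; rewrite ltnn.
have [s_eq | [w s_eq]] := shortest_path_size_le2 uv (P_shortest uS vS ruv Puv);
  rewrite s_eq !inE (negbTE xu) (negbTE xv) ?orbF /= in xy_on Puv; first by [].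
case/andP: xy_on => /eqP xw; rewrite -xw (eq_sym y x) (negbTE xy) /= => yuv.
by exists u, v; rewrite inE uS vS ruv Puv xw !inE.
Qed.

Lemma nonmember_neighbour_mem x y : x \notin S -> e x y -> y \in S.
Proof.
move=> xS /(nonmember_edge_cover xS) [u [v [uvS _ yuv]]].
by move: uvS yuv; rewrite !inE => /and3P[uS vS _] /orP[] /eqP ->.
Qed.

Definition pairs_through (z : T) : {set T * T} :=
  [set uv in ranked_pairs S | P uv.1 uv.2 == Some [:: z; uv.2]].

Lemma pairs_through_sub z :
  pairs_through z \subset ranked_pairs (colour_class (~~ c z)).
Proof.
apply/subsetP => -[u v]; rewrite !inE /= => /andP[/and3P[uS vS ruv] /eqP Puv].
have [/= /and3P[euz ezv _] _ _] := P_shortest uS vS ruv Puv.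
by move: euz ezv; rewrite !eE ruv andbT; case: (c u); case: (c v); case: (c z).
Qed.

Lemma pairs_through_disjoint z z' uv :
  uv \in pairs_through z -> uv \in pairs_through z' -> z = z'.
Proof. by rewrite !inE => /andP[_ /eqP ->] /andP[_ /eqP[]]. Qed.

Lemma colour_class_card_le_pairs_through z : z \notin S ->
  #|colour_class (~~ c z)| <= (#|pairs_through z|).*2.
Proof.
move=> zS.
have cover : colour_class (~~ c z) \subset
             fst @: pairs_through z :|: snd @: pairs_through z.
  apply/subsetP => x; rewrite inE => /eqP cx.
  have ezx : e z x by rewrite eE cx; case: (c z).
  have [u [v [uvS Puv]]] := nonmember_edge_cover zS ezx.
  have uv_z : (u, v) \in pairs_through z by rewrite inE uvS Puv eqxx.
  by move=> /[!inE] /orP[] /eqP ->; apply/orP; [left | right]; apply: imset_f uv_z.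
rewrite -addnn; apply: (leq_trans (subset_leq_card cover)).
apply: (leq_trans (leq_card_setU _ _)).
by apply: leq_add; apply: leq_imset_card.
Qed.

Lemma nonmembers_card_le b : 0 < #|colour_class (~~ b)| ->
  #|colour_class b :\: S| <= #|colour_class (~~ b)|.-1 - odd #|colour_class (~~ b)|.
Proof.
set p := #|colour_class (~~ b)|; set Z := colour_class b :\: S => p_gt0.
have Z_nonmember z : z \in Z -> c z = b /\ z \notin S.
  by rewrite !inE => /andP[zS /eqP].
have through_z z : z \in Z -> p + odd p <= (#|pairs_through z|).*2.
  move=> /Z_nonmember[cz zS]; have := colour_class_card_le_pairs_through zS.
  rewrite cz -/p => le_p; have [odd_p | _] := boolP (odd p); last by rewrite addn0.
  rewrite addn1 ltn_neqAle le_p andbT; apply: contraTneq odd_p => ->.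
  by rewrite odd_double.
have through_Z : \sum_(z in Z) #|pairs_through z| <= #|ranked_pairs (colour_class (~~ b))|.
  apply: leq_sum_card_disjoint => [z z' uv _ _ | z /Z_nonmember[<- _]].
    exact: pairs_through_disjoint.
  exact: pairs_through_sub.
have : #|Z| * (p + odd p) <= p * p.-1.
  apply: (@leq_trans (\sum_(z in Z) (#|pairs_through z|).*2)).
    by rewrite -sum1_card big_distrl /=; apply: leq_sum => z /through_z; rewrite mul1n.
  under eq_bigr do rewrite -mul2n.
  rewrite -big_distrr /= mul2n; apply: leq_trans (leq_card_ranked_pairs _).
  by rewrite leq_double.
by case: (odd p); nia.
Qed.

Lemma nonmembers_eq0 :
  colour_class true :\: S = set0 \/ colour_class false :\: S = set0.
Proof.
case: (set_0Vmem (colour_class true :\: S)) => [|[x xTS]]; [by left | right].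
move: xTS; rewrite !inE => /andP[xS cx]; apply/setP => y; rewrite !inE.
apply/negP => /andP[yS cy]; move/negP: yS; apply.
by apply: nonmember_neighbour_mem xS _; rewrite eE (eqP cx) (eqP cy).
Qed.

End Assignment.

Lemma strong_edge_geodetic_card_ge (S : {set T}) :
  strong_edge_geodetic e S ->
  let pt := #|colour_class true| in let pf := #|colour_class false| in
  0 < pt -> 0 < pf -> #|T| - maxn (pf.-1 - odd pf) (pt.-1 - odd pt) <= #|S|.
Proof.
case=> P [P_shortest P_cover] pt pf pt_gt0 pf_gt0.
have card_S := card_colour_classes_setD S.
have le_t := nonmembers_card_le P_shortest P_cover (b := true) pf_gt0.
have le_f := nonmembers_card_le P_shortest P_cover (b := false) pt_gt0.
rewrite /= -/pt -/pf in le_t le_f.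
by case: (nonmembers_eq0 P_shortest P_cover) => E; rewrite E cards0 in card_S; lia.
Qed.

End CompleteBipartite.

Definition is_left n m (x : 'I_n + 'I_m) : bool := if x is inl _ then true else false.

Lemma Knm_is_left n m x y : Knm n m x y = (is_left x != is_left y).
Proof. by case: x; case: y. Qed.

Lemma card_left n m : #|colour_class (@is_left n m) true| = n.
Proof.
have -> : colour_class (@is_left n m) true = inl @: [set: 'I_n].
  by apply/setP => -[i | j]; rewrite !inE /= ?imset_f //; apply/esym/imsetP => -[].
by rewrite card_imset ?cardsT ?card_ord // => i j [].
Qed.

Lemma card_right n m : #|colour_class (@is_left n m) false| = m.
Proof.
have -> : colour_class (@is_left n m) false = inr @: [set: 'I_m].
  by apply/setP => -[i | j]; rewrite !inE /= ?imset_f //; apply/esym/imsetP => -[].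
by rewrite card_imset ?cardsT ?card_ord // => i j [].
Qed.

Lemma sge_ge_Knm n m : 0 < n -> 0 < m ->
  sge_ge (Knm n m) (n + m - maxn (m.-1 - odd m) (n.-1 - odd n)).
Proof.
move=> n_gt0 m_gt0 S /(strong_edge_geodetic_card_ge (@Knm_is_left n m)) /=.
by rewrite card_left card_right card_sum !card_ord; apply.
Qed.

Lemma sge_geW (T : finType) (e : rel T) k k' : k <= k' -> sge_ge e k' -> sge_ge e k.
Proof. by move=> le_k sge S /sge; apply: leq_trans. Qed.

Theorem mainTheorem6 (n : nat) :
  3 <= n -> odd n ->
  sge_ge (Knm n n) (n + 2) /\ sge_ge (Knm n n.-1) (n + 1).
Proof.
move=> n_ge3 odd_n; have odd_pred_n : odd n.-1 = false.
  by case: n n_ge3 odd_n => //= n _ /negbTE.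
split; apply: sge_geW (sge_ge_Knm _ _); rewrite ?odd_n ?odd_pred_n; lia.
Qed.
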